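(* Let $n$ and $s$ be sufficiently large, $k\in\mathbb N$ and $0<\varepsilon<1$. Suppose $G$ is an $n$-vertex $(\varepsilon,s)$-expander and $\frac{\varepsilon s}{k}\ge 10^5(\log n)^3$. Then there are pairwise edge-disjoint graphs $G_1,\dots,G_k$ with $E(G)=\bigcup_{i\in[k]}E(G_i)$ such that each $G_i$ has vertex set $V(G)$ and is an $\left(\frac{\varepsilon}{4},\frac{\varepsilon s}{10^4k(\log n)^2}\right)$-expander.
   Context: Logarithms are base 2. For $U\subseteq V(G)$, $N_G(U)$ is the set of vertices outside $U$ with a neighbour in $U$; $G-F$ is $G$ with edge set $F$ deleted. An $n$-vertex graph $G$ is an $(\varepsilon,s)$-expander if for every $U\subseteq V(G)$, $F\subseteq E(G)$ with $1\le|U|\le\frac23n$ and $|F|\le s|U|$ we have $|N_{G-F}(U)|\ge\varepsilon|U|/(\log n)^2$. *)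

From HB Require Import structures.
From mathcomp Require Import all_boot all_order all_algebra.
From mathcomp Require Import reals exp.
Set Implicit Arguments. Unset Strict Implicit. Unset Printing Implicit Defensive.
Import Order.TTheory GRing.Theory Num.Theory.
Local Open Scope ring_scope.

Definition log2 {R : realType} (x : R) : R := ln x / ln 2.

Definition simple_graph (T : finType) (E : {set {set T}}) : Prop :=
  forall e, e \in E -> #|e| = 2%N.

Definition nbh (T : finType) (E : {set {set T}}) (U : {set T}) : {set T} :=
  [set v | (v \notin U) && [exists u in U, [set u; v] \in E]].

Definition expander {R : realType} (T : finType) (E : {set {set T}})
    (eps s : R) : Prop :=
  forall (U : {set T}) (F : {set {set T}}),
    (1 <= #|U|)%N ->
    (#|U|%:R : R) <= 2 / 3 * #|T|%:R ->
    F \subset E ->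
    (#|F|%:R : R) <= s * #|U|%:R ->
    eps * #|U|%:R / (log2 (#|T|%:R : R)) ^+ 2 <= #|nbh (E :\: F) U|%:R.

From HB Require Import structures.
From mathcomp Require Import all_boot all_order all_algebra.
From mathcomp Require Import reals exp.
From mathcomp Require Import sequences ring lra.
Import Order.TTheory GRing.Theory Num.Theory.
Local Open Scope ring_scope.

(* Colour every 2-subset of V(G) independently and uniformly with one of k
   colours and let G_i be the colour-i edges of G.  If G_i is not an
   expander, witnessed by U and F, then Y = N_{G_i - F}(U) is small, so the
   edges of G from U to outside U and Y are more than s|U| (otherwise G itself
   would not expand), while their colour-i members all lie in F.  For a fixed
   set of m > s|U| edges, a Chernoff bound makes "at most s'|U| of them get
   colour i" very unlikely; a union bound over the k colours and the at most
   (n+1)^(2|U|) pairs (U, Y) shows that some colouring avoids all these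
   events. *)

Lemma exists_notin_sets (C J : finType) (P : pred J) (B : J -> {set C}) :
  (\sum_(j | P j) #|B j| < #|C|)%N -> exists c, forall j, P j -> c \notin B j.
Proof.
move=> small.
case: (pickP [pred c | [forall j, P j ==> (c \notin B j)]]) => [c /forallP good|].
  by exists c => j; apply/implyP.
move=> all_bad; suff: (#|C| <= \sum_(j | P j) #|B j|)%N by rewrite leqNgt small.
rewrite -sum1_card (eq_bigr _ (fun j _ => esym (sum1_card (mem (B j))))).
rewrite (exchange_big_dep xpredT) //=; apply: leq_sum => c _.
have /forallPn[j] := negbT (all_bad c); rewrite negb_imply negbK => Pj_cBj.
by rewrite (bigD1 j).
Qed.

Lemma card_sets_card_le (T : finType) (j : nat) :
  (#|[set A : {set T} | #|A| <= j]| <= #|T|.+1 ^ j)%N.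
Proof.
pose set_of (f : {ffun 'I_j -> option T}) := [set x | Some x \in codom f].
apply: (@leq_trans #|[set set_of f | f in [set: {ffun 'I_j -> option T}]]|).
  apply: subset_leq_card; apply/subsetP => A; rewrite inE => hA; apply/imsetP.
  exists [ffun i : 'I_j => nth None (map Some (enum A)) i]; first by rewrite inE.
  apply/setP => x; rewrite inE; apply/idP/codomP => [xA | [i]].
    have hi : (index x (enum A) < j)%N.
      by apply: leq_trans hA; rewrite cardE index_mem mem_enum.
    exists (Ordinal hi); rewrite ffunE /= (nth_map x) ?nth_index ?mem_enum //.
    by rewrite index_mem mem_enum.
  rewrite ffunE; case: (ltnP i (size (enum A))) => hi.
    by rewrite (nth_map x) // => -[->]; rewrite -mem_enum mem_nth.
  by rewrite nth_default ?size_map.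
apply: leq_trans (leq_imset_card _ _) _.
by rewrite cardsT card_ffun card_option card_ord.
Qed.

Section Colourings.
Context {D : finType} {k : nat}.

Definition colour_class (S : {set D}) (c : D -> 'I_k) (i : 'I_k) : {set D} :=
  [set e in S | c e == i].

Lemma colour_class_disjoint (S : {set D}) (c : D -> 'I_k) (i j : 'I_k) :
  i != j -> [disjoint colour_class S c i & colour_class S c j].
Proof.
move=> ij; rewrite -setI_eq0; apply/eqP/setP => e; rewrite !inE.
by apply: contraNF ij => /andP[/andP[_ /eqP <-] /andP[_ /eqP <-]].
Qed.

Lemma bigcup_colour_class (S : {set D}) (c : D -> 'I_k) :
  \bigcup_(i < k) colour_class S c i = S.
Proof.
apply/setP => e; apply/bigcupP/idP => [[i _]|eS]; first by rewrite inE => /andP[].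
by exists (c e) => //; rewrite inE eS eqxx.
Qed.

End Colourings.

Section Logarithms.
Context {R : realType}.

Lemma ln2_gt0 : (0 : R) < ln 2.
Proof. by rewrite -ln1 ltr_ln ?posrE // ltr1n. Qed.

Lemma ln2_le1 : ln (2 : R) <= 1.
Proof. by have := @le_ln1Dx R 1 ltac:(lra); rewrite (_ : 1 + 1 = 2). Qed.

Lemma log2_ge1 {n : nat} : (2 <= n)%N -> 1 <= log2 (n%:R : R).
Proof.
move=> n_ge2; rewrite /log2 ler_pdivlMr ?ln2_gt0 // mul1r.
by rewrite ler_ln ?posrE ?ler_nat // (ltr_nat R 0) (leq_trans _ n_ge2).
Qed.

Lemma ln_succ_le_log2 {n : nat} :
  (2 <= n)%N -> ln ((n.+1)%:R : R) <= 2 * log2 n%:R.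
Proof.
move=> n_ge2; have n_gt0 : (0 : R) < n%:R by rewrite ltr0n (leq_trans _ n_ge2).
have ln_n_ge0 : 0 <= ln (n%:R : R) by rewrite ln_ge0 // ler1n (leq_trans _ n_ge2).
apply: (@le_trans _ _ (ln ((n%:R : R) ^+ 2))).
  have n2 : (2 : R) <= n%:R by rewrite ler_nat.
  by rewrite ler_ln ?posrE ?exprn_gt0 // -natr1 expr2; nra.
have : ln (n%:R : R) <= log2 n%:R.
  by rewrite /log2 ler_pdivlMr ?ln2_gt0 // ler_piMr // ln2_le1.
by rewrite lnXn // mulr2n; lra.
Qed.

Lemma colour_failure_exponent_le (n k u : nat) (eps s m : R) :
  (2 <= n)%N -> (0 < k)%N -> 0 < eps -> eps <= 1 -> (0 < u)%N -> s * u%:R < m ->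
  10 ^+ 5 * log2 (n%:R : R) ^+ 3 <= eps * s / k%:R ->
  expR (eps * s / (10 ^+ 4 * k%:R * log2 (n%:R : R) ^+ 2) * u%:R * ln 2
        - m / (2 * k%:R))
  <= ((n.+1)%:R ^+ 4)^-1 ^+ u.
Proof.
move=> n_ge2 k_gt0 eps_gt0 eps_le1 u_gt0 heavy bound.
rewrite -[(_ ^+ 4)^-1]lnK ?posrE ?invr_gt0 ?exprn_gt0 // -expRM_natl ler_expR.
rewrite lnV ?posrE ?exprn_gt0 // lnXn //.
set L := log2 _ in bound *; set A := s / k%:R.
have L_ge1 : 1 <= L := log2_ge1 n_ge2.
have lnN_le : ln ((n.+1)%:R : R) <= 2 * L := ln_succ_le_log2 n_ge2.
have ln2_pos : 0 < ln (2 : R) := ln2_gt0.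
have ln2_le : ln (2 : R) <= 1 := ln2_le1.
have k_gt0' : (0 : R) < k%:R by rewrite ltr0n.
have u_ge1 : (1 : R) <= u%:R by rewrite ler1n.
have L_le_L3 : L <= L ^+ 3 by rewrite exprS ler_peMr ?exprn_ege1 //; lra.
have epsA : 10 ^+ 5 * L ^+ 3 <= eps * A by rewrite /A mulrA.
have A_gt0 : 0 < A.
  have : 0 < eps * A.
    by apply: lt_le_trans epsA; rewrite mulr_gt0 ?exprn_gt0 //; lra.
  by rewrite pmulr_rgt0.
have A_ge : 10 ^+ 5 * L <= A.
  have : eps * A <= A by rewrite ler_piMl // ltW.
  have : 10 ^+ 5 * L <= 10 ^+ 5 * L ^+ 3 by rewrite ler_pM2l ?exprn_gt0.
  lra.
have L2_ge1 : 1 <= L ^+ 2 by rewrite exprn_ege1.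
set s' := eps * s / _.
have s'_eq : s' = eps / L ^+ 2 * (A / 10 ^+ 4).
  by rewrite /s' /A; field; rewrite !gt_eqF ?exprn_gt0 //; lra.
have s'_ge0 : 0 <= s'.
  by rewrite s'_eq; apply: mulr_ge0; apply: divr_ge0; rewrite ?exprn_ge0; lra.
have s'_le : s' <= A / 10 ^+ 4.
  rewrite s'_eq; apply: ler_piMl; first by rewrite divr_ge0 ?exprn_ge0 ?ltW.
  by rewrite ler_pdivrMr ?mul1r; lra.
have m_ge : A * u%:R / 2 <= m / (2 * k%:R).
  rewrite (_ : m / (2 * k%:R) = m / k%:R / 2); last by field; rewrite gt_eqF.
  by rewrite ler_pM2r ?invr_gt0 // /A mulrAC ler_pM2r ?invr_gt0 //; lra.
have first_le : s' * u%:R * ln 2 <= A / 10 ^+ 4 * u%:R.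
  rewrite -mulrA; apply: ler_pM => //; first by rewrite mulr_ge0 //; lra.
  by rewrite ler_piMr //; lra.
have L_le : L <= A / 10 ^+ 5 by rewrite ler_pdivlMr ?exprn_gt0 // mulrC.
have last_le : u%:R * (ln ((n.+1)%:R : R) *+ 4) <= 8 * (A / 10 ^+ 5) * u%:R.
  rewrite mulrC ler_pM2r; lra.
have Au_ge0 : 0 <= A * u%:R by rewrite mulr_ge0; lra.
lra.
Qed.

End Logarithms.

Section RandomColouring.
Context {R : realType} {D : finType} {k : nat}.
Local Notation colouring := {ffun D -> 'I_k}.

Lemma sum_colourings_half_pow (S : {set D}) (i : 'I_k) :
  \sum_(c : colouring) (2^-1 : R) ^+ #|colour_class S c i|
  = k%:R ^+ #|D| * (1 - (2 * k%:R)^-1) ^+ #|S|.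
Proof.
have k_gt0 : (0 < k)%N by apply: leq_ltn_trans (ltn_ord i).
pose F (e : D) (j : 'I_k) : R := if (e \in S) && (j == i) then 2^-1 else 1.
have prodF (c : colouring) :
    (2^-1 : R) ^+ #|colour_class S c i| = \prod_e F e (c e).
  by rewrite -prodr_const /F big_mkcond; apply: eq_bigr => e _; rewrite inE.
rewrite (eq_bigr _ (fun c _ => prodF c)) -(bigA_distr_bigA F).
have sumF e : \sum_j F e j = k%:R * (if e \in S then 1 - (2 * k%:R)^-1 else 1).
  rewrite /F; case: (e \in S) => /=; last by rewrite sumr_const card_ord mulr1.
  rewrite (bigD1 i) //= eqxx (eq_bigr (fun _ => 1)); last by move=> j /negbTE ->.
  rewrite sumr_const cardC1 card_ord -[in RHS](prednK k_gt0).
  by rewrite -natr1; field; rewrite addrC natr1 pnatr_eq0.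
rewrite (eq_bigr _ (fun e _ => sumF e)) big_split /= prodr_const.
by rewrite -big_mkcond /= prodr_const.
Qed.

Lemma card_sparse_colourings_le (S : {set D}) (i : 'I_k) (t : R) :
  #|[set c : colouring | #|colour_class S c i|%:R <= t]|%:R
  <= k%:R ^+ #|D| * expR (t * ln 2 - #|S|%:R / (2 * k%:R)).
Proof.
have k_gt0 : (0 : R) < k%:R by rewrite ltr0n (leq_ltn_trans _ (ltn_ord i)).
set sparse := [set c | _].
have markov : #|sparse|%:R * expR (- t * ln 2)
    <= \sum_(c : colouring) (2^-1 : R) ^+ #|colour_class S c i|.
  rewrite -sum1_card natr_sum mulr_suml big_mkcond /=.
  apply: ler_sum => c _; rewrite mul1r inE; case: ifP => [ct|_]; last first.
    by rewrite exprn_ge0 // invr_ge0.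
  rewrite -[2^-1](lnK (_ : 2^-1 \in Num.pos)) ?posrE ?invr_gt0 //.
  rewrite -expRM_natl ler_expR lnV ?posrE // mulrN !mulNr lerN2.
  by rewrite ler_wpM2r // ltW // ln2_gt0.
have chernoff : (1 - (2 * k%:R)^-1 : R) ^+ #|S| <= expR (- #|S|%:R / (2 * k%:R)).
  have -> : - #|S|%:R / (2 * k%:R) = #|S|%:R * - (2 * k%:R)^-1 :> R by ring.
  rewrite expRM_natl.
  apply: lerXn2r; rewrite ?nnegrE ?expR_ge0 ?expR_ge1Dx //.
  rewrite subr_ge0 invf_le1 ?mulr_gt0 //.
  by rewrite -natrM ler1n muln_gt0 /= -(ltr0n R).
rewrite sum_colourings_half_pow in markov.
move: (le_trans markov (ler_wpM2l (exprn_ge0 #|D| (ltW k_gt0)) chernoff)).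
rewrite -ler_pdivlMr ?expR_gt0 // -expRN -mulrA -expRD.
by rewrite (_ : _ + _ = t * ln 2 - #|S|%:R / (2 * k%:R)) //; ring.
Qed.

Lemma exists_colouring_dense {J : finType} {P : pred J} {S : J -> {set D}}
    {t : J -> R} : (0 < k)%N ->
  k%:R * \sum_(j | P j) expR (t j * ln 2 - #|S j|%:R / (2 * k%:R)) < 1 ->
  exists c : colouring, forall i j, P j -> t j < #|colour_class (S j) c i|%:R.
Proof.
move=> k_gt0 small_sum.
pose bound j := expR (t j * ln 2 - #|S j|%:R / (2 * k%:R)).
pose sparse (p : 'I_k * J) := [set c : colouring |
  #|colour_class (S p.2) c p.1|%:R <= t p.2].
have [|c dense] := @exists_notin_sets _ _ (fun p => P p.2) sparse.
  rewrite -(ltr_nat R) natr_sum.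
  set K : R := #|colouring|%:R.
  have K_gt0 : 0 < K by rewrite ltr0n card_ffun card_ord expn_gt0 k_gt0.
  rewrite (_ : \sum_(p | P p.2) _ = \sum_i \sum_(j | P j) #|sparse (i, j)|%:R);
    last by rewrite pair_big; apply: eq_big => -[].
  apply: le_lt_trans (_ : _ <= \sum_(i < k) K * \sum_(j | P j) bound j) _.
    apply: ler_sum => i _; rewrite mulr_sumr; apply: ler_sum => j _.
    by rewrite /K card_ffun card_ord natrX card_sparse_colourings_le.
  by rewrite sumr_const card_ord -mulr_natl mulrCA -[ltRHS]mulr1 ltr_pM2l.
exists c => i j Pj; rewrite ltNge; apply: contraNN (dense (i, j) Pj).
by rewrite inE.
Qed.
End RandomColouring.

Section Boundary.
Context {T : finType}.
Implicit Types (E F : {set {set T}}) (U Y : {set T}).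

Definition boundary_edges E U Y : {set {set T}} :=
  [set e in E | [exists a in U, exists b,
     [&& b \notin U, b \notin Y & e == [set a; b]]]].

Lemma boundary_edges_sub E U Y : boundary_edges E U Y \subset E.
Proof. by apply/subsetP => e; rewrite inE => /andP[]. Qed.

Lemma nbh_setD_boundary_edges E U Y :
  nbh (E :\: boundary_edges E U Y) U \subset Y.
Proof.
apply/subsetP => b; rewrite inE => /andP[bU /existsP[a /andP[aU]]].
rewrite in_setD => /andP[not_boundary abE]; apply: contraNT not_boundary => bY.
rewrite inE abE; apply/existsP; exists a; rewrite aU; apply/existsP; exists b.
by rewrite bU bY eqxx.
Qed.

Lemma colour_class_boundary_edges_sub {k : nat} E F U (c : {set T} -> 'I_k) i :
  colour_class (boundary_edges E U (nbh (colour_class E c i :\: F) U)) c i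
  \subset F.
Proof.
apply/subsetP => e; rewrite !inE => /andP[/andP[eE /existsP[a /andP[aU]]]].
case/existsP => b /and3P[bU bY /eqP e_ab] ci; apply: contraNT bY => eF.
by rewrite inE bU; apply/existsP; exists a; rewrite aU -e_ab !inE eF eE.
Qed.

End Boundary.

Section SetSums.
Context {R : realType} {T : finType}.
Local Notation n := #|T|.
Local Notation N := ((#|T|.+1)%:R : R).

Lemma sum_sets_by_card (f : nat -> R) :
  \sum_(U : {set T}) f #|U|
  = \sum_(u < n.+1) #|[set U : {set T} | #|U| == u]|%:R * f u.
Proof.
rewrite (partition_big (fun U : {set T} => inord #|U| : 'I_n.+1) xpredT) //=.
apply: eq_bigr => u _; rewrite mulr_natl -sumr_const.
apply: eq_big => [U|U /eqP <-]; last by rewrite inordK // ltnS max_card.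
by rewrite inE -val_eqE /= inordK // ltnS max_card.
Qed.

Lemma sum_nonempty_sets_pow_le (x : R) : 0 <= x -> N * x <= 1 ->
  \sum_(U : {set T} | (0 < #|U|)%N) x ^+ #|U| <= n%:R * (N * x).
Proof.
move=> x_ge0 Nx_le1.
rewrite big_mkcond /=.
rewrite (sum_sets_by_card (fun u => if (0 < u)%N then x ^+ u else 0)).
rewrite big_ord_recl /= mulr0 add0r.
apply: le_trans (_ : _ <= \sum_(u < n) N * x) _; last first.
  by rewrite sumr_const card_ord -(mulr_natl (N * x)).
apply: ler_sum => u _; rewrite /bump /=.
apply: le_trans (_ : _ <= N ^+ u.+1 * x ^+ u.+1) _.
  rewrite ler_wpM2r ?exprn_ge0 // -natrX ler_nat.
  apply: leq_trans (card_sets_card_le T u.+1).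
  by apply: subset_leq_card; apply/subsetP => U; rewrite !inE => /eqP ->.
rewrite -exprMn exprS ler_piMr ?mulr_ge0 //.
by rewrite exprn_ile1 ?mulr_ge0.
Qed.

Lemma sum_small_pairs_pow_le (x : R) : 0 <= x -> N ^+ 2 * x <= 1 ->
  \sum_(p : {set T} * {set T} | (0 < #|p.1|)%N && (#|p.2| <= #|p.1|)%N)
     x ^+ #|p.1|
  <= n%:R * (N ^+ 2 * x).
Proof.
move=> x_ge0 N2x_le1.
rewrite -(pair_big_dep (fun U : {set T} => 0 < #|U|)%N
  (fun U Y : {set T} => #|Y| <= #|U|)%N (fun U _ => x ^+ #|U|)) /=.
apply: le_trans (_ : _ <= \sum_(U : {set T} | (0 < #|U|)%N) (N * x) ^+ #|U|) _.
  apply: ler_sum => U _; rewrite sumr_const exprMn -(mulr_natl (x ^+ #|U|)).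
  rewrite ler_wpM2r ?exprn_ge0 // -natrX ler_nat.
  by apply: leq_trans (card_sets_card_le T #|U|); rewrite cardsE.
by rewrite expr2 -mulrA sum_nonempty_sets_pow_le ?mulr_ge0 // mulrA.
Qed.
End SetSums.

Section Expanders.
Context {R : realType} {T : finType}.
Implicit Types (E : {set {set T}}) (eps s : R).
Local Notation n := #|T|.
Local Notation L := (log2 (#|T|%:R : R)).

Lemma expander_lt_deg {E eps s} (v : T) : (2 <= n)%N -> 0 < eps ->
  expander E eps s -> s < #|[set e in E | v \in e]|%:R.
Proof.
move=> n_ge2 eps_gt0 expE; rewrite ltNge; apply/negP => deg_le.
have isolated : nbh (E :\: [set e in E | v \in e]) [set v] = set0.
  apply/setP => w; rewrite !inE; apply/negP => /andP[_ /existsP[u /andP[]]].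
  rewrite inE => /eqP -> /setDP[vwE /negP]; apply.
  by rewrite inE vwE !inE eqxx.
have n_ge2' : (2 : R) <= n%:R by rewrite ler_nat.
have := expE [set v] [set e in E | v \in e].
rewrite cards1 isolated cards0 !mulr1 => /(_ isT) lower.
have : eps / L ^+ 2 <= 0.
  by apply: lower => //; [lra | apply/subsetP => e; rewrite inE => /andP[]].
have : 0 < eps / L ^+ 2.
  by rewrite divr_gt0 // exprn_gt0 // (lt_le_trans ltr01 (log2_ge1 n_ge2)).
lra.
Qed.

Lemma card_edges_at_le E (v : T) :
  simple_graph E -> (#|[set e in E | v \in e]| <= n)%N.
Proof.
move=> simpleE; apply: leq_trans (leq_imset_card (fun w => [set v; w]) T).
apply: subset_leq_card; apply/subsetP => e; rewrite inE => /andP[eE ve].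
have := simpleE e eE; rewrite (cardsD1 v) ve add1n => -[] /eqP /cards1P[w e_v].
by apply/imsetP; exists w => //; rewrite -e_v setD1K.
Qed.

Lemma expander_lt_card {E eps s} : (2 <= n)%N -> 0 < eps -> simple_graph E ->
  expander E eps s -> s < n%:R.
Proof.
move=> n_ge2 eps_gt0 simpleE expE.
have [v _] : exists v : T, true.
  by have /card_gt0P[v _] : (0 < n)%N := ltnW n_ge2; exists v.
apply: lt_le_trans (expander_lt_deg v n_ge2 eps_gt0 expE) _.
by rewrite ler_nat card_edges_at_le.
Qed.

Lemma expander_colour_class {k : nat} {E eps s eps' s'} {c : {set T} -> 'I_k}
    {i : 'I_k} :
  (2 <= n)%N -> eps' <= eps -> eps' <= 1 -> expander E eps s ->
  (forall U Y : {set T}, (0 < #|U|)%N -> (#|Y| <= #|U|)%N ->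
     s * #|U|%:R < #|boundary_edges E U Y|%:R ->
     s' * #|U|%:R < #|colour_class (boundary_edges E U Y) c i|%:R) ->
  expander (colour_class E c i) eps' s'.
Proof.
move=> n_ge2 eps'_le eps'_le1 expE dense U F U_gt0 U_le _ F_le.
set Y := nbh _ U; rewrite leNgt; apply/negP => Y_small.
have L2_ge1 : 1 <= L ^+ 2 by rewrite exprn_ege1 ?log2_ge1.
have U_ge1 : (1 : R) <= #|U|%:R by rewrite ler1n.
have Y_le_U : (#|Y| <= #|U|)%N.
  rewrite -(ler_nat R); apply: ltW (lt_le_trans Y_small _).
  rewrite ler_pdivrMr ?(lt_le_trans ltr01) //; nra.
have heavy : s * #|U|%:R < #|boundary_edges E U Y|%:R.
  rewrite ltNge; apply/negP => light.
  have := expE U _ U_gt0 U_le (boundary_edges_sub E U Y) light.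
  have := subset_leq_card (nbh_setD_boundary_edges E U Y); rewrite -(ler_nat R).
  have : eps' * #|U|%:R / L ^+ 2 <= eps * #|U|%:R / L ^+ 2.
    have L2_gt0 : 0 < L ^+ 2 by apply: lt_le_trans L2_ge1.
    by rewrite ler_pM2r ?invr_gt0 // ler_pM2r // (lt_le_trans ltr01).
  lra.
have := dense U Y U_gt0 Y_le_U heavy.
have := subset_leq_card (colour_class_boundary_edges_sub E F U c i).
rewrite -(ler_nat R); lra.
Qed.

Definition heavy_pair E s (p : {set T} * {set T}) : bool :=
  [&& (0 < #|p.1|)%N, (#|p.2| <= #|p.1|)%N
    & s * #|p.1|%:R < #|boundary_edges E p.1 p.2|%:R].

Lemma heavy_pair_failure_sum_lt1 E {k : nat} {eps s} :
  (2 <= n)%N -> (0 < k)%N -> (k <= n)%N -> 0 < eps -> eps <= 1 ->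
  10 ^+ 5 * L ^+ 3 <= eps * s / k%:R ->
  k%:R * \sum_(p | heavy_pair E s p)
    expR (eps * s / (10 ^+ 4 * k%:R * L ^+ 2) * #|p.1|%:R * ln 2
          - #|boundary_edges E p.1 p.2|%:R / (2 * k%:R)) < 1.
Proof.
move=> n_ge2 k_gt0 k_le_n eps_gt0 eps_le1 bound.
set N : R := (n.+1)%:R; have N_gt0 : 0 < N by rewrite ltr0n.
set x := (N ^+ 4)^-1; have x_ge0 : 0 <= x by rewrite invr_ge0 exprn_ge0 ?ltW.
have N2x : N ^+ 2 * x = (N ^+ 2)^-1.
  rewrite /x (_ : 4 = 2 + 2)%N // exprD invfM mulrA.
  by rewrite divff ?mul1r ?expf_neq0 ?gt_eqF.
have N2x_le1 : N ^+ 2 * x <= 1.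
  by rewrite N2x invf_le1 ?exprn_gt0 ?exprn_ege1 // ler1n.
apply: le_lt_trans (_ : _ <= k%:R * (n%:R * (N ^+ 2 * x))) _.
  rewrite ler_pM2l ?ltr0n //.
  apply: le_trans _ (sum_small_pairs_pow_le _ x_ge0 N2x_le1).
  rewrite [leRHS]big_mkcond [leLHS]big_mkcond; apply: ler_sum => -[U Y] _ /=.
  case heavy: (heavy_pair E s (U, Y)); last by case: ifP; rewrite ?exprn_ge0.
  move: heavy => /and3P[U_gt0 Y_le_U heavy] /=; rewrite U_gt0 Y_le_U.
  exact: colour_failure_exponent_le.
rewrite N2x mulrA ltr_pdivrMr ?exprn_gt0 // mul1r -natrM -natrX ltr_nat.
by apply: leq_ltn_trans (leq_mul k_le_n (leqnn n)) _; rewrite expnS expn1 ltn_mul.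
Qed.
End Expanders.

Theorem mainTheorem16 (R : realType) :
  exists (N0 : nat) (S0 : R),
  forall (T : finType) (E : {set {set T}}) (s eps : R) (k : nat),
    (N0 <= #|T|)%N -> S0 <= s -> (0 < k)%N ->
    0 < eps -> eps < 1 ->
    simple_graph E ->
    expander E eps s ->
    10 ^+ 5 * (log2 (#|T|%:R : R)) ^+ 3 <= eps * s / k%:R ->
    exists G : 'I_k -> {set {set T}},
      (forall i j, i != j -> [disjoint G i & G j]) /\
      E = \bigcup_(i < k) G i /\
      (forall i, expander (G i) (eps / 4)
         (eps * s / (10 ^+ 4 * k%:R * (log2 (#|T|%:R : R)) ^+ 2))).
Proof.
exists 2%N, 0 => T E s eps k n_ge2 _ k_gt0 eps_gt0 eps_lt1 simpleE expE bound.
have s_lt_n := expander_lt_card n_ge2 eps_gt0 simpleE expE.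
have k_le_n : (k <= #|T|)%N.
  have L3_ge1 : 1 <= log2 (#|T|%:R : R) ^+ 3 by rewrite exprn_ege1 ?log2_ge1.
  have : 1 <= eps * s / k%:R by apply: le_trans bound; lra.
  rewrite ler_pdivlMr ?ltr0n // mul1r => k_le.
  have k_ge1 : (1 : R) <= k%:R by rewrite ler1n.
  have s_gt0 : 0 < s by rewrite -(pmulr_rgt0 _ eps_gt0); lra.
  by apply: ltnW; rewrite -(ltr_nat R); nra.
have [c dense] := exists_colouring_dense k_gt0
  (heavy_pair_failure_sum_lt1 E n_ge2 k_gt0 k_le_n eps_gt0 (ltW eps_lt1) bound).
exists (colour_class E c); split; first exact: colour_class_disjoint.
split; first by rewrite bigcup_colour_class.
move=> i; apply: (expander_colour_class n_ge2 _ _ expE); try lra.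
move=> U Y U_gt0 Y_le_U heavy.
by apply: (dense i (U, Y)); rewrite /heavy_pair U_gt0 Y_le_U.
Qed.
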